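(* Consider the two-layer multi-item order fulfillment problem described in the context with $K\ge 2$ FDCs and any given fixed costs $f_0,f_1,\dots,f_K\ge 0$, and let constants $b>a>0$ bound the variable costs, $a\le c_{k,t}^i\le b$. Then every online fulfillment policy $\mathrm{ALG}$ (deterministic or randomized) satisfies \[\mathfrak{R}(\mathrm{ALG})\ge \max\left\{1,\ \frac{b}{4a},\ \frac14\max_{n\ge 2}\min\left\{n,\ \frac{f_0}{\min_{k\in[K]}f_k+na}\right\}\right\},\] where the inner maximum is over integers $n\ge 2$.
   Context: Problem. There are $n$ items, $K$ front distribution centers (FDCs) indexed by $k\in[K]$, and one regional distribution center (RDC) indexed by $k=0$ with unlimited inventory of every item. FDC $k$ initially holds $I_{k,0}^i\ge 0$ units of item $i$, never replenished. In each period $t=1,\dots,T$ an order $\boldsymbol S_t=(S_t^i)_{i}$ of nonnegative integers arrives; after observing $\boldsymbol S_t$ and the variable costs $c_{k,t}^i$, a policy must immediately and irrevocably choose $m_{k,t}^i\ge 0$ with $\sum_{k=0}^K m_{k,t}^i=S_t^i$ and $m_{k,t}^i\le I_{k,t-1}^i$ ($k\in[K]$), where $I_{k,t}^i=I_{k,0}^i-\sum_{\tau\le t}m_{k,\tau}^i$. Period cost: $\sum_{k=0}^K[f_k\mathbb{I}(\sum_i m_{k,t}^i>0)+\sum_i c_{k,t}^i m_{k,t}^i]$; total cost is the sum over periods. An online policy (possibly randomized) decides in period $t$ using only fixed costs, initial inventories, and orders and variable costs up to period $t$. For an instance $I$ (choice of $n,T$, inventories, variable costs, orders), $\mathrm{ALG}(I)$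 is the (expected) total cost of the policy and $\mathrm{OPT}(I)$ the optimal total cost with full knowledge of $I$. The competitive ratio $\mathfrak R(\mathrm{ALG})$ is the supremum of $\mathrm{ALG}(I)/\mathrm{OPT}(I)$ over all $n,T$, initial inventories, variable costs in $[a,b]$ and order sequences. *)

From HB Require Import structures.
From mathcomp Require Import all_boot all_order all_algebra.
From mathcomp Require Import all_classical all_reals all_analysis.
From mathcomp Require Import measurable_realfun.
Set Implicit Arguments. Unset Strict Implicit. Unset Printing Implicit Defensive.
Import Order.TTheory GRing.Theory Num.Theory.
Local Open Scope ring_scope.
Local Open Scope classical_set_scope.

(* Facilities are indexed by 'I_K.+1 : index 0 is the RDC, 1..K the FDCs.
   Items are indexed by 'I_n. *)

(* Data revealed in one period: the order S_t and the variable costs c_{.,t}. *)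
Definition period_data (R : realType) (K n : nat) : Type :=
  ({ffun 'I_n -> nat} * {ffun 'I_K.+1 -> {ffun 'I_n -> R}})%type.

(* A decision (m_{k,t}^i)_{k,i}; also used for inventory vectors
   (the entry for k = 0, the RDC, is ignored since its inventory is unlimited). *)
Definition decision (K n : nat) : Type := {ffun 'I_K.+1 -> {ffun 'I_n -> nat}}.

(* An instance: number of items n, initial inventories I_{k,0}^i, and the
   sequence of periods t = 1..T (T = size of the list) with orders and costs. *)
Record instance (R : realType) (K : nat) := Instance {
  inst_n : nat;
  inst_inv0 : decision K inst_n;
  inst_periods : seq (period_data R K inst_n) }.

(* A deterministic online policy: in period t it sees the number of items,
   the initial inventories and the history of orders and variable costs of
   periods 1..t (last element = current period), and outputs m_{.,t}.
   (Fixed costs are parameters of the problem, hence known to the policy.) *)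
Definition policy (R : realType) (K : nat) : Type :=
  forall n : nat, decision K n -> seq (period_data R K n) -> decision K n.

Section Model.
Variables (R : realType) (K : nat).

Definition run (pol : policy R K) (I : instance R K) : seq (decision K (inst_n I)) :=
  [seq pol (inst_n I) (inst_inv0 I) (take t.+1 (inst_periods I))
     | t <- iota 0 (size (inst_periods I))].

Fixpoint feasible_from (n : nat) (inv : decision K n)
    (ps : seq (period_data R K n)) (plan : seq (decision K n)) : bool :=
  match ps, plan with
  | [::], [::] => true
  | p :: ps', m :: plan' =>
      [forall i : 'I_n, (\sum_(k < K.+1) m k i)%N == p.1 i]
      && [forall k : 'I_K.+1, forall i : 'I_n, (0 < k)%N ==> (m k i <= inv k i)%N]
      && feasible_from [ffun k => [ffun i => (inv k i - m k i)%N]] ps' plan'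
  | _, _ => false
  end.

Unset Implicit Arguments.
Definition feasible (I : instance R K) (plan : seq (decision K (inst_n I))) : bool :=
  feasible_from (inst_inv0 I) (inst_periods I) plan.

Definition period_cost (f : nat -> R) (n : nat) (c : {ffun 'I_K.+1 -> {ffun 'I_n -> R}})
    (m : decision K n) : R :=
  \sum_(k < K.+1) ((if (0 < \sum_(i < n) m k i)%N then f k else 0)
                   + \sum_(i < n) c k i * (m k i)%:R).

Definition plan_cost (f : nat -> R) (I : instance R K)
    (plan : seq (decision K (inst_n I))) : R :=
  \sum_(x <- zip (inst_periods I) plan) period_cost f (inst_n I) x.1.2 x.2.

Set Implicit Arguments.

Definition valid_instance (a b : R) (I : instance R K) : bool :=
  all (fun p : period_data R K (inst_n I) =>
         [forall k : 'I_K.+1, forall i : 'I_(inst_n I), (a <= p.2 k i) && (p.2 k i <= b)])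
      (inst_periods I).

Definition feasible_policy (a b : R) (pol : policy R K) : Prop :=
  forall I, valid_instance a b I -> feasible I (run pol I).

Definition OPT (f : nat -> R) (I : instance R K) : \bar R :=
  ereal_inf [set (plan_cost f I p)%:E | p in [set p : seq (decision K (inst_n I)) | feasible I p]].

(* Randomized policy: a random variable w |-> pol w over a probability space;
   ALG(I) = expected total cost. *)
Definition ALG (f : nat -> R) (d : measure_display) (Omega : measurableType d)
    (P : probability Omega R) (pol : Omega -> policy R K) (I : instance R K) : \bar R :=
  (\int[P]_w (plan_cost f I (run (pol w) I))%:E)%E.

Definition comp_ratio (f : nat -> R) (a b : R) (d : measure_display)
    (Omega : measurableType d) (P : probability Omega R) (pol : Omega -> policy R K) : \bar R :=
  ereal_sup [set (ALG f P pol I * ((fine (OPT f I))^-1)%:E)%E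
            | I in [set I | valid_instance a b I /\ (0 < OPT f I)%E]].

Definition lower_bound (f : nat -> R) (a b : R) : R :=
  let fmin := \big[Num.min/f 1%N]_(1 <= k < K.+1) f k in
  Num.max 1 (Num.max (b / (4 * a))
    (4^-1 * sup [set Num.min (n%:R) (f 0%N / (fmin + n%:R * a)) | n in [set n : nat | (2 <= n)%N]])).

End Model.

Arguments feasible {R K}.
Arguments plan_cost {R K}.

From HB Require Import structures.
From mathcomp Require Import all_boot all_order all_algebra.
From mathcomp Require Import all_classical all_reals all_analysis.
From mathcomp Require Import measurable_realfun.
From mathcomp Require Import zify.
From mathcomp.algebra_tactics Require Import ring lra.
Import Order.TTheory GRing.Theory Num.Theory.
Set Implicit Arguments. Unset Strict Implicit. Unset Printing Implicit Defensive.
Local Open Scope ring_scope.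
Local Open Scope classical_set_scope.

(* Yao-style argument.  A randomized policy is a mixture of deterministic ones, so it suffices
   to exhibit two instances I1, I2 with OPT(I_j) <= D_j such that every deterministic policy
   satisfies cost(I1)/D1 + cost(I2)/D2 >= 2L; the expected ratio is then at least L on one of them.
   The two instances share their first period, so the policy must commit before learning
   which one it faces.
   - Variable costs: one item, N units stocked everywhere; two periods order N units, the first
     cheap (cost a) at FDCs k1, k2, the second cheap only at k1, resp. only at k2.  Whatever
     is shipped from k1, k2 first is missing later, so the two costs sum to at least (3a+b)N
     while each optimum is at most 2aN + f_k1 + f_k2.  Letting N grow gives every
     L < (3a+b)/(4a), which covers both 1 and b/(4a).
   - Fixed costs: one unit of each of n items at the cheapest FDC ks and an order for all
     n items.  Either the RDC is opened (cost f_0 against OPT <= f_ks + na), or the FDC is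
     emptied and then n single-item orders each open the RDC (cost n f_0 against
     OPT <= f_0 + n (f_ks + na)); this gives L = min(n, f_0/(f_ks + na))/4. *)

Lemma bigmin_nat_attained (R : realDomainType) (F : nat -> R) m n : (m < n)%N ->
  exists2 k, (m <= k < n)%N & \big[Num.min/F m]_(m <= k < n) F k = F k.
Proof.
move=> mn; rewrite big_nat_cond.
apply: (big_ind (fun y => exists2 k, (m <= k < n)%N & y = F k)).
- by exists m; rewrite ?leqnn.
- move=> x y [kx kx_in ->] [ky ky_in ->].
  by rewrite /Order.min; case: ifP => _; [exists kx | exists ky].
- by move=> k /andP[k_in _]; exists k.
Qed.

Lemma scaled_sup_le (R : realType) (A : set R) (s : R) (c : \bar R) :
  A !=set0 -> 0 < s -> (forall x, A x -> ((s * x)%:E <= c)%E) -> ((s * sup A)%:E <= c)%E.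
Proof.
move=> [x0 Ax0] s_gt0; case: c => [c||] A_le; rewrite ?leey //; last first.
  by have := A_le _ Ax0; rewrite leeNy_eq.
rewrite lee_fin -ler_pdivlMl //; apply: ge_sup; first by exists x0.
by move=> x /A_le; rewrite lee_fin ler_pdivlMl.
Qed.

Lemma lincomb_integral_ge (R : realType) (d : measure_display) (Omega : measurableType d)
    (P : probability Omega R) (X Y : Omega -> R) (s t L : R) :
  measurable_fun [set: Omega] (EFin \o X) -> measurable_fun [set: Omega] (EFin \o Y) ->
  (forall w, 0 <= X w) -> (forall w, 0 <= Y w) -> 0 <= s -> 0 <= t -> 0 <= L ->
  (forall w, L <= s * X w + t * Y w) ->
  (L%:E <= s%:E * \int[P]_w (X w)%:E + t%:E * \int[P]_w (Y w)%:E)%E.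
Proof.
move=> mX mY X_ge0 Y_ge0 s_ge0 t_ge0 L_ge0 comb.
have mZ (Z : Omega -> R) r : measurable_fun [set: Omega] (EFin \o Z) ->
    measurable_fun [set: Omega] (fun w => r%:E * (Z w)%:E)%E.
  exact: measurable_funeM.
rewrite -!ge0_integralZl ?lee_fin //; last 2 first.
- by move=> w _; rewrite lee_fin.
- by move=> w _; rewrite lee_fin.
rewrite -(ge0_integralD P _ (f1 := (fun w => s%:E * (X w)%:E)%E)
                            (f2 := (fun w => t%:E * (Y w)%:E)%E)) //; first last.
- exact: mZ.
- by move=> w _; rewrite -EFinM lee_fin mulr_ge0.
- exact: mZ.
- by move=> w _; rewrite -EFinM lee_fin mulr_ge0.
have -> : L%:E = (\int[P]_w (cst L%:E w))%E.
  by rewrite integral_cst // -[X in (_ * X)%E]/(P setT) probability_setT mule1.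
apply: ge0_le_integral => //; first exact: emeasurable_funD (mZ _ _ mX) (mZ _ _ mY).
by move=> w _; rewrite -!EFinM -EFinD lee_fin comb.
Qed.

Section Feasibility.
Variables (R : realType) (K : nat).

Lemma feasible_from_cons n (inv : decision K n) (p : period_data R K n) ps plan :
  feasible_from inv (p :: ps) plan ->
  exists m plan', [/\ plan = m :: plan',
    forall i, (\sum_(k < K.+1) m k i)%N = p.1 i,
    forall (k : 'I_K.+1) i, (0 < k)%N -> (m k i <= inv k i)%N &
    feasible_from [ffun k => [ffun i => (inv k i - m k i)%N]] ps plan'].
Proof.
case: plan => [|m plan] //= /andP[/andP[/forallP meet /forallP stock] rest].
exists m, plan; split => // [i | k i k_gt0]; first exact/eqP/meet.
by move/forallP: (stock k) => /(_ i); rewrite k_gt0.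
Qed.

Lemma feasible_from_cumulative n (inv : decision K n) (ps : seq (period_data R K n)) plan :
  size ps = size plan ->
  all (fun x : period_data R K n * decision K n =>
         [forall i, (\sum_(k < K.+1) x.2 k i)%N == x.1.1 i]) (zip ps plan) ->
  (forall (k : 'I_K.+1) i, (0 < k)%N -> (\sum_(m <- plan) m k i <= inv k i)%N) ->
  feasible_from inv ps plan.
Proof.
elim: ps inv plan => [|p ps IH] inv [|m plan] //= [size_eq] /andP[-> meet] stock /=.
apply/andP; split.
  apply/forallP => k; apply/forallP => i; apply/implyP => k_gt0.
  by have := stock k i k_gt0; rewrite big_cons; lia.
by apply: IH => // k i k_gt0; rewrite !ffunE; have := stock k i k_gt0; rewrite big_cons; lia.
Qed.

Definition policy_cost (f : nat -> R) (pol : policy R K) (I : instance R K) : R :=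
  plan_cost f I (run pol I).

Lemma run_cons (pol : policy R K) n inv p ps :
  exists rest, run pol (@Instance R K n inv (p :: ps)) = pol n inv [:: p] :: rest.
Proof. by eexists; rewrite /run /= take0. Qed.

End Feasibility.

Section Costs.
Variables (R : realType) (K : nat) (f : nat -> R).
Hypothesis f_ge0 : forall k : 'I_K.+1, 0 <= f k.

Definition nonneg_costs n (p : period_data R K n) : bool :=
  [forall k, forall i, 0 <= p.2 k i].

Definition cost_from n (ps : seq (period_data R K n)) (plan : seq (decision K n)) : R :=
  \sum_(x <- zip ps plan) period_cost R K f n x.1.2 x.2.

Lemma plan_costE (I : instance R K) plan :
  plan_cost f I plan = cost_from (inst_periods I) plan.
Proof. by []. Qed.

Lemma cost_from_nil n plan : @cost_from n [::] plan = 0.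
Proof. by rewrite /cost_from; case: plan => [|? ?]; rewrite big_nil. Qed.

Lemma cost_from_cons n p ps m plan :
  @cost_from n (p :: ps) (m :: plan) = period_cost R K f n p.2 m + cost_from ps plan.
Proof. by rewrite /cost_from /= big_cons. Qed.

Lemma period_cost_ge_var n (c : {ffun 'I_K.+1 -> {ffun 'I_n -> R}}) (m : decision K n) :
  \sum_(k < K.+1) \sum_(i < n) c k i * (m k i)%:R <= period_cost R K f n c m.
Proof. by apply: ler_sum => k _; rewrite lerDr; case: ifP. Qed.

Lemma period_cost_ge0 n (c : {ffun 'I_K.+1 -> {ffun 'I_n -> R}}) (m : decision K n) :
  (forall k i, 0 <= c k i) -> 0 <= period_cost R K f n c m.
Proof.
move=> c_ge0; apply: le_trans (period_cost_ge_var c m).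
by do 2!apply: sumr_ge0 => ? _; apply: mulr_ge0.
Qed.

Lemma period_cost_ge_fixed n (c : {ffun 'I_K.+1 -> {ffun 'I_n -> R}}) (m : decision K n) k0 :
  (forall k i, 0 <= c k i) -> (0 < \sum_(i < n) m k0 i)%N ->
  f k0 <= period_cost R K f n c m.
Proof.
move=> c_ge0 used; rewrite /period_cost (bigD1 k0) //= used -addrA lerDl.
apply: addr_ge0; first by apply: sumr_ge0 => i _; apply: mulr_ge0.
apply: sumr_ge0 => k _; apply: addr_ge0; first by case: ifP.
by apply: sumr_ge0 => i _; apply: mulr_ge0.
Qed.

Lemma cost_from_ge0 n ps plan :
  all (@nonneg_costs n) ps -> 0 <= cost_from ps plan.
Proof.
elim: ps plan => [|p ps IH] [|m plan] /=; rewrite ?cost_from_nil // /cost_from ?big_nil //.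
move=> /andP[/forallP p_ge0 ps_ge0]; rewrite -/(cost_from _ (_ :: _)) cost_from_cons.
apply: addr_ge0 (IH _ ps_ge0); apply: period_cost_ge0 => k i.
by move/forallP: (p_ge0 k); apply.
Qed.

Lemma cost_from_ge_first_order (a : R) n (p : period_data R K n) ps (m : decision K n) plan :
  (forall i, (\sum_(k < K.+1) m k i)%N = p.1 i) -> (forall k i, a <= p.2 k i) ->
  all (@nonneg_costs n) ps ->
  a * (\sum_(i < n) p.1 i)%:R <= cost_from (p :: ps) (m :: plan).
Proof.
move=> meet a_le ps_ge0; rewrite cost_from_cons -[X in X <= _]addr0.
apply: lerD (cost_from_ge0 _ ps_ge0); apply: le_trans (period_cost_ge_var _ _).
rewrite natr_sum mulr_sumr exchange_big; apply: ler_sum => i _ /=.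
by rewrite -meet natr_sum mulr_sumr; apply: ler_sum => k _; apply: ler_wpM2r.
Qed.

Lemma cost_from_ge_rdc_fixed n (inv : decision K n) ps plan :
  (forall (k : 'I_K.+1) i, (0 < k)%N -> inv k i = 0%N) -> all (@nonneg_costs n) ps ->
  feasible_from inv ps plan ->
  f 0%N * (count (fun p : period_data R K n => (0 < \sum_(i < n) p.1 i)%N) ps)%:R
    <= cost_from ps plan.
Proof.
elim: ps inv plan => [|p ps IH] inv plan empty; first by rewrite mulr0 cost_from_nil.
move=> /= /andP[/forallP p_ge0 ps_ge0] /feasible_from_cons[m [plan' [-> meet stock rest]]].
have c_ge0 k i : 0 <= p.2 k i by move/forallP: (p_ge0 k); apply.
have fdc_idle (k : 'I_K.+1) i : (0 < k)%N -> m k i = 0%N.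
  by move=> k_gt0; have := stock k i k_gt0; rewrite empty //; lia.
rewrite cost_from_cons natrD mulrDr; apply: lerD; last first.
  by apply: IH rest => // k i k_gt0; rewrite !ffunE empty.
case: posnP => [_|demand]; first by rewrite mulr0; apply: period_cost_ge0.
rewrite mulr1; apply: (period_cost_ge_fixed (k0 := ord0)) => //.
have rdc_ships i : m ord0 i = p.1 i.
  by rewrite -meet big_ord_recl big1 ?addn0 // => k _; apply: fdc_idle.
by rewrite (eq_bigr _ (fun i _ => rdc_ships i)).
Qed.

Lemma valid_nonneg_costs a b (I : instance R K) :
  0 <= a -> valid_instance a b I -> all (@nonneg_costs _) (inst_periods I).
Proof.
move=> a_ge0 /allP valid; apply/allP => p /valid /forallP p_valid.
apply/forallP => k; apply/forallP => i.
by move/forallP: (p_valid k) => /(_ i) /andP[+ _]; apply: le_trans.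
Qed.

Lemma plan_cost_ge0 a b (I : instance R K) plan :
  0 <= a -> valid_instance a b I -> 0 <= plan_cost f I plan.
Proof. by move=> a_ge0 /(valid_nonneg_costs a_ge0); apply: cost_from_ge0. Qed.

Lemma OPT_le_plan_cost (I : instance R K) plan :
  feasible I plan -> (OPT f I <= (plan_cost f I plan)%:E)%E.
Proof. by move=> feas; apply: ereal_inf_lbound; exists plan. Qed.

Lemma le_OPT (I : instance R K) r :
  (forall plan, feasible I plan -> r <= plan_cost f I plan) -> (r%:E <= OPT f I)%E.
Proof. by move=> lb; apply/ereal_infP => _ [p feas <-]; rewrite lee_fin lb. Qed.

Lemma OPT_ge_first_order (a b : R) n (inv : decision K n) (p : period_data R K n) ps :
  0 <= a -> valid_instance a b (Instance inv (p :: ps)) ->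
  ((a * (\sum_(i < n) p.1 i)%:R)%:E <= OPT f (Instance inv (p :: ps)))%E.
Proof.
move=> a_ge0 valid; have /= /andP[_ ps_ge0] := valid_nonneg_costs a_ge0 valid.
apply: le_OPT => plan /feasible_from_cons[m [plan' [-> meet _ _]]].
apply: cost_from_ge_first_order => // k i.
by case/andP: valid => /forallP /(_ k) /forallP /(_ i) /andP[].
Qed.

End Costs.

Definition ship_from K n (k0 : 'I_K.+1) (v : {ffun 'I_n -> nat}) : decision K n :=
  [ffun k => if k == k0 then v else [ffun => 0%N]].

Lemma sum_ship_from K n k0 v i : (\sum_(k < K.+1) @ship_from K n k0 v k i)%N = v i.
Proof.
rewrite (bigD1 k0) //= ffunE eqxx big1 ?addn0 // => k /negbTE k_ne.
by rewrite ffunE k_ne ffunE.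
Qed.

Lemma period_cost_ship_from (R : realType) K (f : nat -> R) n
    (c : {ffun 'I_K.+1 -> {ffun 'I_n -> R}}) k0 v :
  period_cost R K f n c (ship_from k0 v) =
  (if (0 < \sum_(i < n) v i)%N then f k0 else 0) + \sum_(i < n) c k0 i * (v i)%:R.
Proof.
rewrite /period_cost (bigD1 k0) //= ffunE eqxx [X in _ + X]big1 ?addr0 // => k /negbTE k_ne.
rewrite ffunE k_ne; under eq_bigr do rewrite ffunE.
by rewrite big1 // big1 ?addr0 // => i _; rewrite ffunE mulr0.
Qed.

Section Averaging.
Variables (R : realType) (K : nat) (f : nat -> R) (a b : R).
Variables (d : measure_display) (Omega : measurableType d) (P : probability Omega R).
Variable pol : Omega -> policy R K.
Hypothesis f_ge0 : forall k : 'I_K.+1, 0 <= f k.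
Hypothesis a_ge0 : 0 <= a.
Hypothesis pol_measurable : forall I : instance R K, valid_instance a b I ->
  measurable_fun [set: Omega] (fun w => (plan_cost f I (run (pol w) I))%:E).

Lemma ALG_ge0 (I : instance R K) : valid_instance a b I -> (0 <= ALG f P pol I)%E.
Proof.
by move=> valid; apply: integral_ge0 => w _; rewrite lee_fin (plan_cost_ge0 f_ge0 _ a_ge0 valid).
Qed.

Lemma ALG_div_le_comp_ratio (I : instance R K) (D : R) :
  valid_instance a b I -> (0 < OPT f I)%E -> (OPT f I <= D%:E)%E ->
  (ALG f P pol I * (D^-1)%:E <= comp_ratio f a b P pol)%E.
Proof.
move=> valid; case opt: (OPT f I) => [x||] //; rewrite lte_fin lee_fin => x_gt0 x_le.
apply: le_trans (_ : ALG f P pol I * (x^-1)%:E <= _)%E.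
  apply: lee_wpmul2l; first exact: ALG_ge0.
  by rewrite lee_fin lef_pV2 ?posrE // (lt_le_trans x_gt0).
by apply: ereal_sup_ubound; exists I; rewrite /= opt // lte_fin.
Qed.

Lemma comp_ratio_ge_mean (I1 I2 : instance R K) (D1 D2 L : R) :
  valid_instance a b I1 -> valid_instance a b I2 ->
  (0 < OPT f I1)%E -> (OPT f I1 <= D1%:E)%E -> (0 < OPT f I2)%E -> (OPT f I2 <= D2%:E)%E ->
  0 <= L ->
  (forall w, 2 * L <= policy_cost f (pol w) I1 / D1 + policy_cost f (pol w) I2 / D2) ->
  (L%:E <= comp_ratio f a b P pol)%E.
Proof.
move=> valid1 valid2 opt1_gt0 opt1_le opt2_gt0 opt2_le L_ge0 mean.
have D_gt0 (I : instance R K) (D : R) : (0 < OPT f I)%E -> (OPT f I <= D%:E)%E -> 0 < D.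
  by move=> gt0 le; rewrite -lte_fin (lt_le_trans gt0).
have D1_gt0 := D_gt0 _ _ opt1_gt0 opt1_le; have D2_gt0 := D_gt0 _ _ opt2_gt0 opt2_le.
have mean_ALG : ((2 * L)%:E <= ALG f P pol I1 * (D1^-1)%:E + ALG f P pol I2 * (D2^-1)%:E)%E.
  rewrite !(muleC (ALG _ _ _ _)).
  apply: (lincomb_integral_ge P (pol_measurable valid1) (pol_measurable valid2)).
  - by move=> w; apply: plan_cost_ge0 valid1.
  - by move=> w; apply: plan_cost_ge0 valid2.
  - by rewrite invr_ge0 ltW.
  - by rewrite invr_ge0 ltW.
  - by rewrite mulr_ge0.
  - by move=> w; rewrite ![_^-1 * _]mulrC mean.
have := le_trans mean_ALG (leeD (ALG_div_le_comp_ratio valid1 opt1_gt0 opt1_le)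
                                (ALG_div_le_comp_ratio valid2 opt2_gt0 opt2_le)).
case: (comp_ratio f a b P pol) => [r||]; rewrite ?leey ?addNye ?leeNy_eq //.
by rewrite -EFinD !lee_fin; lra.
Qed.

End Averaging.

Section FixedCostInstances.
Variables (R : realType) (K : nat) (f : nat -> R) (a b : R) (n : nat) (ks : 'I_K.+1).
Hypotheses (f_ge0 : forall k : 'I_K.+1, 0 <= f k) (a_ge0 : 0 <= a) (a_le_b : a <= b).

Definition unit_stock : decision K n := [ffun k => [ffun => nat_of_bool (k == ks)]].
Definition flat_costs : {ffun 'I_K.+1 -> {ffun 'I_n -> R}} := [ffun => [ffun => a]].
Definition full_order : period_data R K n := ([ffun => 1%N], flat_costs).
Definition item_order (i : 'I_n) : period_data R K n :=
  ([ffun j => nat_of_bool (j == i)], flat_costs).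

Definition bundle_instance := @Instance R K n unit_stock [:: full_order].
Definition split_instance :=
  @Instance R K n unit_stock (full_order :: [seq item_order i | i <- enum 'I_n]).

Lemma full_order_size : (\sum_(i < n) full_order.1 i)%N = n.
Proof. by under eq_bigr do rewrite ffunE; rewrite sum_nat_const card_ord muln1. Qed.

Lemma item_order_size i : (\sum_(j < n) (item_order i).1 j)%N = 1%N.
Proof.
rewrite (bigD1 i) //= ffunE eqxx big1 // => j /negbTE j_ne.
by rewrite ffunE j_ne.
Qed.

Lemma flat_costs_within :
  [forall k, forall i, (a <= flat_costs k i) && (flat_costs k i <= b)].
Proof. by apply/forallP => k; apply/forallP => i; rewrite !ffunE lexx. Qed.

Lemma valid_bundle_instance : valid_instance a b bundle_instance.
Proof. by rewrite /valid_instance /= flat_costs_within. Qed.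

Lemma valid_split_instance : valid_instance a b split_instance.
Proof.
rewrite /valid_instance /= flat_costs_within all_map.
by apply/allP => i _; apply: flat_costs_within.
Qed.

Lemma OPT_bundle_ge : ((a * n%:R)%:E <= OPT f bundle_instance)%E.
Proof.
by have := OPT_ge_first_order f_ge0 a_ge0 valid_bundle_instance; rewrite full_order_size.
Qed.

Lemma OPT_split_ge : ((a * n%:R)%:E <= OPT f split_instance)%E.
Proof.
by have := OPT_ge_first_order f_ge0 a_ge0 valid_split_instance; rewrite full_order_size.
Qed.

Lemma OPT_bundle_le : (0 < n)%N -> (OPT f bundle_instance <= (f ks + n%:R * a)%:E)%E.
Proof.
move=> n_gt0.
have feas : feasible bundle_instance [:: ship_from ks full_order.1].
  apply: feasible_from_cumulative => //=.
    by rewrite andbT; apply/forallP => i; rewrite sum_ship_from.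
  move=> k i _; rewrite big_seq1 !ffunE.
  by case: (k == ks); rewrite ?ffunE.
apply: le_trans (OPT_le_plan_cost f feas) _.
rewrite plan_costE /= cost_from_cons cost_from_nil addr0 period_cost_ship_from.
rewrite full_order_size n_gt0 lee_fin lerD2l.
by under eq_bigr do rewrite !ffunE mulr1; rewrite sumr_const card_ord mulr_natl.
Qed.

Lemma OPT_split_le : (0 < ks)%N -> (0 < n)%N ->
  (OPT f split_instance <= (f 0%N + n%:R * a + n%:R * (f ks + a))%:E)%E.
Proof.
move=> ks_gt0 n_gt0.
pose plan := ship_from ord0 full_order.1 :: [seq ship_from ks (item_order i).1 | i <- enum 'I_n].
have feas : feasible split_instance plan.
  apply: feasible_from_cumulative => /=; first by rewrite !size_map.
    rewrite zip_map all_map /=; apply/andP; split.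
      by apply/forallP => i; rewrite sum_ship_from.
    by apply/allP => i _; apply/forallP => j; rewrite sum_ship_from.
  move=> k i k_gt0; rewrite big_cons big_map big_enum /= !ffunE.
  have /negbTE -> : k != ord0 by rewrite -lt0n.
  rewrite ffunE add0n; under eq_bigr do rewrite ffunE.
  case: (k == ks); last by rewrite big1 // => j _; rewrite ffunE.
  by rewrite (bigD1 i) //= ffunE eqxx big1 // => j /negbTE j_ne; rewrite ffunE eq_sym j_ne.
apply: le_trans (OPT_le_plan_cost f feas) _.
rewrite plan_costE /= cost_from_cons period_cost_ship_from full_order_size n_gt0.
rewrite /cost_from zip_map big_map big_enum /= lee_fin.
under eq_bigr do rewrite !ffunE mulr1.
rewrite [X in _ + X <= _](eq_bigr (fun=> f ks + a)) => [|i _].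
  by rewrite !sumr_const !card_ord !mulr_natl.
rewrite period_cost_ship_from item_order_size /=; congr (_ + _).
rewrite (bigD1 i) //= !ffunE eqxx mulr1 big1 ?addr0 // => j /negbTE j_ne.
by rewrite !ffunE j_ne mulr0.
Qed.

Lemma bundle_cost_ge_rdc (pol : policy R K) :
  (0 < \sum_(i < n) pol n unit_stock [:: full_order] ord0 i)%N ->
  f 0%N <= policy_cost f pol bundle_instance.
Proof.
move=> rdc_used; have [rest run_eq] := run_cons pol unit_stock full_order [::].
rewrite /policy_cost /bundle_instance plan_costE run_eq /= cost_from_cons cost_from_nil addr0.
by apply: (period_cost_ge_fixed f_ge0 (k0 := ord0)) => // k i; rewrite !ffunE.
Qed.

Lemma split_cost_ge_rdc (pol : policy R K) :
  feasible_policy a b pol ->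
  (\sum_(i < n) pol n unit_stock [:: full_order] ord0 i)%N = 0%N ->
  f 0%N * n%:R <= policy_cost f pol split_instance.
Proof.
move=> pol_feas.
have /= /andP[_ items_ge0] := valid_nonneg_costs a_ge0 valid_split_instance.
set items := [seq item_order i | i <- enum 'I_n] in items_ge0 *.
have [rest run_eq] := run_cons pol unit_stock full_order items.
have : feasible_from unit_stock (full_order :: items) (pol n unit_stock [:: full_order] :: rest).
  by have := pol_feas _ valid_split_instance; rewrite /feasible run_eq.
rewrite /policy_cost plan_costE run_eq.
case/feasible_from_cons => m [plan' [[m_eq ->] meet stock rest_feas]].
rewrite m_eq => /eqP; rewrite sum_nat_eq0 => /forallP rdc_idle.
have fdc_idle (k : 'I_K.+1) i : k != ks -> m k i = 0%N.
  move=> k_ne; have [->|k_ne0] := eqVneq k ord0; first by apply/eqP; exact: rdc_idle.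
  by have := stock k i; rewrite !ffunE (negbTE k_ne) lt0n k_ne0 leqn0 => /(_ isT)/eqP.
have ks_ships i : m ks i = 1%N.
  have := meet i; rewrite ffunE (bigD1 ks) //= big1 ?addn0 // => k k_ne.
  exact: fdc_idle.
have stock_empty (k : 'I_K.+1) i : (0 < k)%N ->
    [ffun k => [ffun i => (unit_stock k i - m k i)%N]] k i = 0%N.
  by move=> _; rewrite !ffunE; case: eqVneq => [->|_]; rewrite ?ks_ships.
rewrite cost_from_cons; apply: ler_wpDl.
  by apply: period_cost_ge0 => // k i; rewrite !ffunE.
apply: le_trans (cost_from_ge_rdc_fixed f_ge0 stock_empty items_ge0 rest_feas); rewrite count_map.
rewrite (@eq_count _ _ predT) ?count_predT ?size_enum_ord // => i.
by rewrite /= item_order_size.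
Qed.

Lemma fixed_cost_dichotomy (pol : policy R K) : feasible_policy a b pol ->
  f 0%N <= policy_cost f pol bundle_instance \/
  f 0%N * n%:R <= policy_cost f pol split_instance.
Proof.
move=> pol_feas; case: (posnP (\sum_(i < n) pol n unit_stock [:: full_order] ord0 i)).
  by right; apply: split_cost_ge_rdc.
by left; apply: bundle_cost_ge_rdc.
Qed.

End FixedCostInstances.

Section VarCostInstances.
Variables (R : realType) (K : nat) (f : nat -> R) (a b : R) (N : nat).
Hypotheses (f_ge0 : forall k : 'I_K.+1, 0 <= f k) (a_ge0 : 0 <= a) (a_le_b : a <= b).

Definition tiered_costs (C : {set 'I_K.+1}) : {ffun 'I_K.+1 -> {ffun 'I_1 -> R}} :=
  [ffun k => [ffun => if k \in C then a else b]].
Definition full_stock : decision K 1 := [ffun => [ffun => N]].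
Definition bulk_order (C : {set 'I_K.+1}) : period_data R K 1 := ([ffun => N], tiered_costs C).
Definition two_period_instance (S : {set 'I_K.+1}) (j : 'I_K.+1) :=
  @Instance R K 1 full_stock [:: bulk_order S; bulk_order [set j]].

Lemma sum_tiered_costs (C : {set 'I_K.+1}) (x : 'I_K.+1 -> R) :
  \sum_(k < K.+1) tiered_costs C k ord0 * x k
  = b * \sum_(k < K.+1) x k - (b - a) * \sum_(k in C) x k.
Proof.
rewrite [X in _ - _ * X]big_mkcond !mulr_sumr -sumrB; apply: eq_bigr => k _; rewrite !ffunE.
by case: (k \in C); ring.
Qed.

Lemma valid_two_period_instance S j : valid_instance a b (two_period_instance S j).
Proof.
have within (C : {set 'I_K.+1}) :
    [forall k, forall i, (a <= tiered_costs C k i) && (tiered_costs C k i <= b)].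
  by apply/forallP => k; apply/forallP => i; rewrite !ffunE; case: ifP => _; rewrite lexx ?andbT.
by rewrite /valid_instance /= !within.
Qed.

Lemma OPT_two_period_ge S j : ((a * N%:R)%:E <= OPT f (two_period_instance S j))%E.
Proof.
have := OPT_ge_first_order f_ge0 a_ge0 (valid_two_period_instance S j).
by rewrite big_ord1 ffunE.
Qed.

Lemma OPT_two_period_le (S : {set 'I_K.+1}) (j j' : 'I_K.+1) : j != j' -> j' \in S ->
  (OPT f (two_period_instance S j) <= (2 * a * N%:R + (f j + f j'))%:E)%E.
Proof.
move=> j_ne j'_in.
have feas : feasible (two_period_instance S j)
                    [:: ship_from j' [ffun => N]; ship_from j [ffun => N]].
  apply: feasible_from_cumulative => //=.
    by apply/and3P; split => //; apply/forallP => i; rewrite sum_ship_from.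
  move=> k i _; rewrite !big_cons big_nil addn0 !ffunE.
  by case: eqVneq => [->|_]; [rewrite eq_sym (negbTE j_ne) | case: ifP]; rewrite !ffunE ?addn0.
apply: le_trans (OPT_le_plan_cost f feas) _.
rewrite plan_costE /= !cost_from_cons cost_from_nil addr0 !period_cost_ship_from !big_ord1.
rewrite !ffunE j'_in set11 lee_fin.
have fixed_le (k : 'I_K.+1) : (if (0 < N)%N then f k else 0) <= f k by case: ifP.
by have := fixed_le j; have := fixed_le j'; lra.
Qed.

Lemma two_period_cost_ge (pol : policy R K) (S : {set 'I_K.+1}) (j : 'I_K.+1) :
  (0 < j)%N -> feasible_policy a b pol ->
  let m := pol 1%N full_stock [:: bulk_order S] in
  exists y : nat, [/\ (\sum_(k < K.+1) m k ord0)%N = N, (y + m j ord0 <= N)%N &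
    2 * b * N%:R - (b - a) * (\sum_(k in S) (m k ord0)%:R + y%:R)
      <= policy_cost f pol (two_period_instance S j)].
Proof.
move=> j_gt0 pol_feas m.
have [rest run_eq] := run_cons pol full_stock (bulk_order S) [:: bulk_order [set j]].
have : feasible_from full_stock [:: bulk_order S; bulk_order [set j]] (m :: rest).
  by have := pol_feas _ (valid_two_period_instance S j); rewrite /feasible run_eq.
case/feasible_from_cons => m0 [plan0 [[m0_eq plan0_eq] meet1 _]].
subst m0 plan0.
case/feasible_from_cons => m' [plan [rest_eq meet2 stock2 _]].
have served1 : (\sum_(k < K.+1) m k ord0)%N = N by rewrite meet1 ffunE.
have served2 : (\sum_(k < K.+1) m' k ord0)%N = N by rewrite meet2 ffunE.
exists (m' j ord0); split => //.
  have := stock2 j ord0 j_gt0; rewrite !ffunE.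
  have : (m j ord0 <= N)%N by rewrite -[X in (_ <= X)%N]served1 (bigD1 j) //= leq_addr.
  lia.
rewrite /policy_cost plan_costE run_eq rest_eq !cost_from_cons cost_from_nil addr0.
apply: le_trans (lerD (period_cost_ge_var f_ge0 _ _) (period_cost_ge_var f_ge0 _ _)).
rewrite /= !(eq_bigr _ (fun k _ => big_ord1 _ _)) !sum_tiered_costs -!natr_sum served1 served2.
by rewrite big_set1; lra.
Qed.

End VarCostInstances.

Lemma two_period_pair_cost_ge (R : realType) (K : nat) (f : nat -> R) (a b : R) (N : nat)
    (pol : policy R K) (k1 k2 : 'I_K.+1) :
  (forall k : 'I_K.+1, 0 <= f k) -> 0 <= a -> a <= b -> feasible_policy a b pol ->
  k1 != k2 -> (0 < k1)%N -> (0 < k2)%N ->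
  (3 * a + b) * N%:R <= policy_cost f pol (two_period_instance a b N [set k1; k2] k1)
                        + policy_cost f pol (two_period_instance a b N [set k1; k2] k2).
Proof.
move=> f_ge0 a_ge0 a_le_b pol_feas k12 k1_gt0 k2_gt0.
have cost_ge := two_period_cost_ge N f_ge0 a_ge0 a_le_b (pol := pol) [set k1; k2].
have [y1 [served y1_le cost1]] := cost_ge _ k1_gt0 pol_feas.
have [y2 [_ y2_le cost2]] := cost_ge _ k2_gt0 pol_feas.
set m := pol 1%N _ _ in served y1_le cost1 y2_le cost2.
have x12_le : (m k1 ord0 + m k2 ord0 <= N)%N.
  by rewrite -served (bigD1 k1) //= (bigD1 k2) 1?eq_sym //= addnA leq_addr.
rewrite big_setU1 ?inE //= big_set1 in cost1 cost2.
move: x12_le y1_le y2_le; rewrite -!(ler_nat R) !natrD => x12_le y1_le y2_le.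
have ba_ge0 : 0 <= b - a by rewrite subr_ge0.
have := ler_wpM2l ba_ge0 x12_le; have := ler_wpM2l ba_ge0 y1_le.
have := ler_wpM2l ba_ge0 y2_le; rewrite !mulrDr.
lra.
Qed.

Section LowerBounds.
Variables (R : realType) (K : nat) (f : nat -> R) (a b : R).
Variables (d : measure_display) (Omega : measurableType d) (P : probability Omega R).
Variable pol : Omega -> policy R K.
Hypotheses (f_ge0 : forall k : 'I_K.+1, 0 <= f k) (a_gt0 : 0 < a) (a_lt_b : a < b).
Hypothesis pol_feasible : forall w, feasible_policy a b (pol w).
Hypothesis pol_measurable : forall I : instance R K, valid_instance a b I ->
  measurable_fun [set: Omega] (fun w => (plan_cost f I (run (pol w) I))%:E).

Let a_ge0 := ltW a_gt0.
Let a_le_b := ltW a_lt_b.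

Lemma comp_ratio_ge_fixed_cost n (ks : 'I_K.+1) :
  (0 < ks)%N -> (2 <= n)%N ->
  ((4^-1 * Num.min n%:R (f 0%N / (f ks + n%:R * a)))%:E <= comp_ratio f a b P pol)%E.
Proof.
move=> ks_gt0 n_ge2; have n_gt0 : (0 < n)%N by lia.
have n_ge2R : 2 <= n%:R :> R by rewrite (ler_nat R 2 n).
have an_gt0 : 0 < a * n%:R by rewrite mulr_gt0 // ltr0n.
have fks_ge0 := f_ge0 ks; have f0_ge0 := f_ge0 ord0.
set g := f ks + n%:R * a; set m0 := Num.min _ _.
have g_gt0 : 0 < g by rewrite /g mulrC; apply: ltr_wpDl.
have m0_le_n : m0 <= n%:R by rewrite ge_min lexx.
have m0g_le : m0 * g <= f 0%N by rewrite -ler_pdivlMr // ge_min lexx orbT.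
have m0_ge0 : 0 <= m0 by rewrite le_min ler0n divr_ge0 // ltW.
have D2_gt0 : 0 < f 0%N + n%:R * g by apply: ltr_wpDl => //; rewrite mulr_gt0 ?ltr0n.
apply: (comp_ratio_ge_mean P f_ge0 a_ge0 pol_measurable (D1 := g) (D2 := f 0%N + n%:R * g)
  (valid_bundle_instance n ks a_le_b) (valid_split_instance n ks a_le_b)).
- by apply: lt_le_trans (OPT_bundle_ge n ks f_ge0 a_ge0 a_le_b); rewrite lte_fin.
- exact: OPT_bundle_le.
- by apply: lt_le_trans (OPT_split_ge n ks f_ge0 a_ge0 a_le_b); rewrite lte_fin.
- apply: le_trans (OPT_split_le f a ks_gt0 n_gt0) _.
  rewrite lee_fin /g; nra.
- by rewrite mulr_ge0 ?invr_ge0.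
move=> w; set cA := policy_cost _ _ _; set cB := policy_cost _ _ _.
have cA_ge0 : 0 <= cA by apply: plan_cost_ge0 (valid_bundle_instance n ks a_le_b).
have cB_ge0 : 0 <= cB by apply: plan_cost_ge0 (valid_split_instance n ks a_le_b).
have qA : 0 <= cA / g by rewrite divr_ge0 // ltW.
have qB : 0 <= cB / (f 0%N + n%:R * g) by rewrite divr_ge0 // ltW.
suff [] : m0 / 2 <= cA / g \/ m0 / 2 <= cB / (f 0%N + n%:R * g) by lra.
case: (fixed_cost_dichotomy n ks f_ge0 a_ge0 a_le_b (pol_feasible w)) => [cA_ge|cB_ge].
  left; rewrite ler_pdivlMr //; apply: le_trans cA_ge.
  have : 0 <= m0 * g by rewrite mulr_ge0 // ltW.
  lra.
right; rewrite ler_pdivlMr //; apply: le_trans cB_ge.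
have : 0 <= (n%:R - m0) * f 0%N by rewrite mulr_ge0 // subr_ge0.
have : 0 <= n%:R * (f 0%N - m0 * g) by rewrite mulr_ge0 // subr_ge0.
nra.
Qed.

Lemma comp_ratio_ge_var_cost L :
  (2 <= K)%N -> 0 <= L -> 4 * a * L < 3 * a + b -> (L%:E <= comp_ratio f a b P pol)%E.
Proof.
move=> K_ge2 L_ge0 L_lt.
have k1_lt : (1 < K.+1)%N by lia.
have k2_lt : (2 < K.+1)%N by lia.
pose k1 : 'I_K.+1 := Ordinal k1_lt; pose k2 : 'I_K.+1 := Ordinal k2_lt.
have k12 : k1 != k2 by [].
set F := f k1 + f k2; set gap := 3 * a + b - 4 * a * L.
have gap_gt0 : 0 < gap by rewrite subr_gt0.
have F_ge0 : 0 <= F by rewrite addr_ge0.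
pose N := (Num.Def.archi_bound (2 * L * F / gap)).+1.
have N_large : 2 * L * F < N%:R * gap.
  rewrite -ltr_pdivrMr //; apply: lt_trans (archi_boundP _) _.
    by rewrite divr_ge0 ?mulr_ge0 // ltW.
  by rewrite ltr_nat.
have N_gt0 : 0 < N%:R :> R by rewrite ltr0n.
set D := 2 * a * N%:R + F.
set I := two_period_instance a b N [set k1; k2].
have OPT_gt0 j : (0 < OPT f (I j))%E.
  by apply: lt_le_trans (OPT_two_period_ge _ f_ge0 a_ge0 a_le_b _ _); rewrite lte_fin mulr_gt0.
apply: (comp_ratio_ge_mean P f_ge0 a_ge0 pol_measurable (D1 := D) (D2 := D)
  (valid_two_period_instance N a_le_b [set k1; k2] k1)
  (valid_two_period_instance N a_le_b [set k1; k2] k2) (OPT_gt0 k1) _ (OPT_gt0 k2)) => //.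
- by apply: OPT_two_period_le; rewrite // !inE eqxx.
- rewrite /D /F [f k1 + _]addrC; by apply: OPT_two_period_le; rewrite // !inE eqxx.
move=> w; have := two_period_pair_cost_ge N f_ge0 a_ge0 a_le_b (pol_feasible w) k12 isT isT.
rewrite -mulrDl => pair_ge.
have D_gt0 : 0 < D by rewrite /D ltr_wpDr // !mulr_gt0.
rewrite ler_pdivlMr //; apply/ltW/(lt_le_trans _ pair_ge).
have -> : (3 * a + b) * N%:R = N%:R * gap + N%:R * (4 * a * L) by rewrite /gap; ring.
have -> : 2 * L * D = 2 * L * F + N%:R * (4 * a * L) by rewrite /D; ring.
by rewrite ltrD2r.
Qed.

End LowerBounds.

Theorem theorem2 (R : realType) (K : nat) (f : nat -> R) (a b : R)
    (d : measure_display) (Omega : measurableType d) (P : probability Omega R)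
    (pol : Omega -> policy R K) :
  (2 <= K)%N ->
  (forall k, (k <= K)%N -> 0 <= f k) ->
  0 < a -> a < b ->
  (forall w, feasible_policy a b (pol w)) ->
  (forall I : instance R K, valid_instance a b I ->
     measurable_fun [set: Omega] (fun w : Omega => (plan_cost f I (run (pol w) I))%:E)) ->
  ((lower_bound K f a b)%:E <= comp_ratio f a b P pol)%E.
Proof.
move=> K_ge2 f_ge0' a_gt0 a_lt_b pol_feas pol_meas.
have f_ge0 (k : 'I_K.+1) : 0 <= f k by apply: f_ge0'; rewrite -ltnS.
have var_cost_bound L :=
  comp_ratio_ge_var_cost P f_ge0 a_gt0 a_lt_b pol_feas pol_meas (L := L) K_ge2.
have [ks /andP[ks_gt0 ks_lt] ks_min] := bigmin_nat_attained f (leqW K_ge2).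
rewrite /lower_bound ks_min !EFin_max !ge_max; apply/and3P; split.
- by apply: var_cost_bound; lra.
- apply: var_cost_bound; first by rewrite divr_ge0 // ?mulr_ge0 // ltW // (lt_trans a_gt0).
  by rewrite mulrC divfK ?mulf_neq0 // ?gt_eqF //; lra.
apply: scaled_sup_le => //; first by exists (Num.min 2%:R (f 0%N / (f ks + 2%:R * a))), 2%N.
move=> _ [n n_ge2 <-].
exact: (comp_ratio_ge_fixed_cost P f_ge0 a_gt0 a_lt_b pol_feas pol_meas (ks := Ordinal ks_lt)).
Qed.
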